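(* Let $N,M_t,M_r$ be positive integers, $P_0>0$, $\sigma^2>0$, $\alpha\in\mathbb C$, $L>0$, and $\theta,\theta_1,\theta_2\in\mathbb R$. Let $\mathbf G_t=\sqrt{L}\,\mathbf a(\theta_2)\mathbf c^T(\theta_1)\in\mathbb C^{N\times M_t}$ and $\mathbf G_r=\sqrt{L}\,\mathbf b(\theta_1)\mathbf a^T(\theta_2)\in\mathbb C^{M_r\times N}$. Then $\mathrm{SNR}_1^\star:=\max_{\mathbf R,\mathbf\Phi}\mathrm{SNR}_1(\mathbf R,\mathbf\Phi)=\frac{P_0|\alpha|^2L^2M_tM_rN^4}{\sigma^2}$ and $\mathrm{SNR}_2^\star:=\max_{\mathbf R,\mathbf\Phi}\mathrm{SNR}_2(\mathbf R,\mathbf\Phi)=\frac{P_0|\alpha|^2LM_tM_rN^2}{\sigma^2}$, where the maxima are over all positive semidefinite $\mathbf R\in\mathbb C^{M_t\times M_t}$ with $\mathrm{tr}(\mathbf R)\le P_0$ and all $\mathbf\Phi=\mathrm{diag}(e^{j\phi_1},\dots,e^{j\phi_N})$, $\phi_n\in\mathbb R$. In particular these grow proportionally to $N^4$ and $N^2$, respectively.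
   Context: $j=\sqrt{-1}$. Fix $\hat d>0$, $\lambda>0$. For a positive integer $K$, $\mathbf s_K(\theta)\in\mathbb C^K$ has $k$-th entry $e^{j\pi(2k-K-1)\hat d\sin\theta/\lambda}$. Set $\mathbf a(\theta)=\mathbf s_N(\theta)$, $\mathbf b(\theta)=\mathbf s_{M_r}(\theta)$, $\mathbf c(\theta)=\mathbf s_{M_t}(\theta)$. Define $\mathrm{SNR}_1(\mathbf R,\mathbf\Phi)=\frac{|\alpha|^2\|\mathbf G_r\mathbf\Phi^T\mathbf a(\theta)\|^2\,\mathbf a^T(\theta)\mathbf\Phi\mathbf G_t\mathbf R\mathbf G_t^H\mathbf\Phi^H\mathbf a^*(\theta)}{\sigma^2}$, $\mathrm{SNR}_2(\mathbf R,\mathbf\Phi)=\frac{|\alpha|^2\|\mathbf b(\theta)\|^2\,\mathbf a^T(\theta)\mathbf\Phi\mathbf G_t\mathbf R\mathbf G_t^H\mathbf\Phi^H\mathbf a^*(\theta)}{\sigma^2}$. *)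

From mathcomp Require Import all_boot all_order all_algebra.
From mathcomp Require Import all_classical all_reals all_analysis.
From mathcomp Require Import complex.
Set Implicit Arguments. Unset Strict Implicit. Unset Printing Implicit Defensive.
Import Order.TTheory GRing.Theory Num.Theory.
Local Open Scope ring_scope.

Section Defs.
Variable R : realType.
Local Notation C := R[i].

Definition rC (x : R) : C := Complex x 0.

Definition expj (x : R) : C := Complex (cos x) (sin x).

Definition herm m n (A : 'M[C]_(m, n)) : 'M[C]_(n, m) := (map_mx Num.conj A)^T.

(* steering vector s_K(theta), entry k (1-based k = i+1):
   exp(j pi (2k-K-1) dhat sin(theta) / lambda) *)
Definition steer (dhat lambda : R) (K : nat) (theta : R) : 'cV[C]_K :=
  \col_(i < K) expj (pi * (((2 * i + 1)%:R : R) - K%:R) * dhat * sin theta / lambda).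

Definition sqnorm n (v : 'cV[C]_n) : C := \sum_(i < n) `|v i 0| ^+ 2.

Definition psd n (A : 'M[C]_n) : Prop :=
  herm A = A /\ forall x : 'cV[C]_n, 0 <= (herm x *m A *m x) 0 0.

Definition phase_mx N (phi : 'I_N -> R) : 'M[C]_N := diag_mx (\row_n expj (phi n)).

Definition feasible Mt N (P0 : R) (Rm : 'M[C]_Mt) (Phi : 'M[C]_N) : Prop :=
  psd Rm /\ \tr Rm <= rC P0 /\ exists phi : 'I_N -> R, Phi = phase_mx phi.

Definition tx_gain N Mt (a : 'cV[C]_N) (Phi : 'M[C]_N) (Gt : 'M[C]_(N, Mt))
    (Rm : 'M[C]_Mt) : C :=
  (a^T *m Phi *m Gt *m Rm *m herm Gt *m herm Phi *m map_mx Num.conj a) 0 0.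

Definition SNR1 N Mt Mr (dhat lambda theta : R) (alpha : C) (sigma2 : R)
    (Gt : 'M[C]_(N, Mt)) (Gr : 'M[C]_(Mr, N)) (Rm : 'M[C]_Mt) (Phi : 'M[C]_N) : C :=
  let a := steer dhat lambda N theta in
  `|alpha| ^+ 2 * sqnorm (Gr *m Phi^T *m a) * tx_gain a Phi Gt Rm / rC sigma2.

Definition SNR2 N Mt Mr (dhat lambda theta : R) (alpha : C) (sigma2 : R)
    (Gt : 'M[C]_(N, Mt)) (Rm : 'M[C]_Mt) (Phi : 'M[C]_N) : C :=
  let a := steer dhat lambda N theta in
  `|alpha| ^+ 2 * sqnorm (steer dhat lambda Mr theta) * tx_gain a Phi Gt Rm / rC sigma2.

Definition is_max_value Mt N (P0 : R) (f : 'M[C]_Mt -> 'M[C]_N -> C) (v : C) : Prop :=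
  (forall Rm Phi, feasible P0 Rm Phi -> f Rm Phi <= v) /\
  (exists Rm Phi, feasible P0 Rm Phi /\ f Rm Phi = v).

End Defs.

From mathcomp Require Import all_boot all_order all_algebra.
From mathcomp Require Import all_classical all_reals all_analysis.
From mathcomp Require Import complex ring.
Set Implicit Arguments. Unset Strict Implicit. Unset Printing Implicit Defensive.
Import Order.TTheory GRing.Theory Num.Theory.
Local Open Scope ring_scope.

(* Both channels have rank one.  Writing s = a(theta)^T Phi a(theta2) and
   w = conj c(theta1), one gets G_r Phi^T a(theta) = sqrt L s b(theta1) and
   a^T Phi G_t R G_t^H Phi^H conj a = L |s|^2 w^H R w, so SNR_1 and SNR_2 are
   positive multiples of |s|^4 w^H R w and |s|^2 w^H R w, and the two factors
   are maximised independently.  By the triangle inequality |s| <= N, with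
   equality when the phases of Phi cancel those of a(theta) and a(theta2).  For
   R positive semidefinite and |x_k| = 1, x^H R x <= n tr R: summing the
   nonnegative forms of R at x_i e_i - x_j e_j over all pairs (i, j) gives
   2 (n tr R - x^H R x).  Equality holds for R = (P0 / M_t) w w^H. *)

Section RisBeamforming.
Variable R : realType.
Local Notation C := R[i].
Local Notation cj := (map_mx (@Num.conj C)).

Lemma rCE : @rC R =1 real_complex R. Proof. by []. Qed.

Lemma conj_rC (x : R) : (rC x)^* = rC x.
Proof. by apply/eqP; rewrite eq_complex /= oppr0 !eqxx. Qed.

Lemma rC_ge0 (x : R) : 0 <= x -> 0 <= rC x.
Proof. by move=> x_ge0; rewrite lecE /= eqxx. Qed.

Lemma norm_expj (x : R) : `|expj x| = 1.
Proof. by rewrite normc_def /= cos2Dsin2 sqrtr1. Qed.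

Lemma expjD (x y : R) : expj x * expj y = expj (x + y).
Proof.
by apply/eqP; rewrite eq_complex /= cosD sinD; apply/andP; split; apply/eqP; ring.
Qed.

Lemma expj0 : expj (0 : R) = 1.
Proof. by rewrite /expj cos0 sin0. Qed.

Lemma hermB m n (A B : 'M[C]_(m, n)) : herm (A - B) = herm A - herm B.
Proof. by apply/matrixP => i j; rewrite !mxE rmorphB. Qed.

Lemma hermZ m n k (A : 'M[C]_(m, n)) : herm (k *: A) = k^* *: herm A.
Proof. by apply/matrixP => i j; rewrite !mxE rmorphM. Qed.

Lemma herm_delta n (i : 'I_n) : herm (delta_mx i 0) = delta_mx 0 i :> 'M[C]_(1, n).
Proof. by apply/matrixP => k l; rewrite !mxE conjC_nat andbC. Qed.

Lemma herm_mul m n p (A : 'M[C]_(m, n)) (B : 'M[C]_(n, p)) :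
  herm (A *m B) = herm B *m herm A.
Proof. by rewrite /herm map_mxM trmx_mul. Qed.

Lemma hermK m n (A : 'M[C]_(m, n)) : herm (herm A) = A.
Proof. by apply/matrixP => i j; rewrite !mxE conjCK. Qed.

Lemma herm_trmx m n (A : 'M[C]_(m, n)) : herm A^T = cj A.
Proof. by apply/matrixP => i j; rewrite !mxE. Qed.

Lemma herm_conj m n (A : 'M[C]_(m, n)) : herm (cj A) = A^T.
Proof. by rewrite -herm_trmx hermK. Qed.

Definition qform n (A : 'M[C]_n) (x : 'cV[C]_n) : C := (herm x *m A *m x) 0 0.

Lemma qformE n (A : 'M[C]_n) (x : 'cV[C]_n) :
  qform A x = \sum_i \sum_j (x i 0)^* * A i j * x j 0.
Proof.
rewrite /qform mxE exchange_big; apply: eq_bigr => j _; rewrite mxE mulr_suml.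
by apply: eq_bigr => i _; rewrite !mxE.
Qed.

Lemma qformZ n k (A : 'M[C]_n) (x : 'cV[C]_n) : qform (k *: A) x = k * qform A x.
Proof. by rewrite /qform -scalemxAr -scalemxAl mxE. Qed.

Lemma qform_pair n (A : 'M[C]_n) (x : 'cV[C]_n) i j :
  `|x i 0| = 1 -> `|x j 0| = 1 ->
  qform A (x i 0 *: delta_mx i 0 - x j 0 *: delta_mx j 0)
  = A i i + A j j - (x i 0)^* * A i j * x j 0 - (x j 0)^* * A j i * x i 0.
Proof.
move=> xi_unit xj_unit; rewrite /qform -mulmxA mulmxBr -!scalemxAr -!colE.
rewrite hermB !hermZ !herm_delta mulmxBl -!scalemxAl -!rowE.
have xi : (x i 0)^* * x i 0 = 1 by rewrite -normCKC xi_unit expr1n.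
have xj : (x j 0)^* * x j 0 = 1 by rewrite -normCKC xj_unit expr1n.
by rewrite !mxE !mulrBr !mulrA xi xj; ring.
Qed.

Lemma qform_le_trace n (A : 'M[C]_n) (x : 'cV[C]_n) :
  psd A -> (forall k, `|x k 0| = 1) -> qform A x <= n%:R * \tr A.
Proof.
move=> [_ A_psd] x_unit.
pose y i j := x i 0 *: delta_mx i 0 - x j 0 *: delta_mx j 0 : 'cV[C]_n.
have pair_sum : \sum_i \sum_j qform A (y i j) = 2%:R * (n%:R * \tr A - qform A x).
  under eq_bigr do under eq_bigr do rewrite qform_pair ?x_unit //.
  rewrite qformE /mxtrace.
  under eq_bigr do rewrite !sumrB big_split /= sumr_const card_ord.
  rewrite !sumrB big_split /= sumrMnl sumr_const card_ord.
  rewrite [X in _ - X](exchange_big _ _ _ _ _ (fun i j => (x j 0)^* * A j i * x i 0)) /=.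
  move: (\sum_i A i i) (\sum_i \sum_j (x i 0)^* * A i j * x j 0) => T Q.
  rewrite -mulr_natl; ring.
have : 0 <= \sum_i \sum_j qform A (y i j).
  by apply: sumr_ge0 => i _; apply: sumr_ge0 => j _; exact: A_psd.
by rewrite pair_sum pmulr_rge0 ?ltr0n // subr_ge0.
Qed.

Lemma sqnormE n (v : 'cV[C]_n) : sqnorm v = (herm v *m v) 0 0.
Proof. by rewrite /sqnorm mxE; apply: eq_bigr => i _; rewrite !mxE normCKC. Qed.

Lemma sqnormZ n k (v : 'cV[C]_n) : sqnorm (k *: v) = `|k| ^+ 2 * sqnorm v.
Proof.
by rewrite /sqnorm mulr_sumr; apply: eq_bigr => i _; rewrite mxE normrM exprMn.
Qed.

Lemma sqnorm_unit n (v : 'cV[C]_n) : (forall k, `|v k 0| = 1) -> sqnorm v = n%:R.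
Proof.
move=> v_unit; rewrite /sqnorm (eq_bigr (fun _ => 1)) ?sumr_const ?card_ord //.
by move=> k _; rewrite v_unit expr1n.
Qed.

Lemma mxtrace_outer n (v : 'cV[C]_n) : \tr (v *m herm v) = sqnorm v.
Proof.
by rewrite /mxtrace /sqnorm; apply: eq_bigr => i _; rewrite !mxE big_ord1 !mxE normCK.
Qed.

Lemma qform_outer n (v x : 'cV[C]_n) : qform (v *m herm v) x = `|(herm v *m x) 0 0| ^+ 2.
Proof.
have hermM : herm x *m v = herm (herm v *m x) by rewrite herm_mul hermK.
by rewrite /qform mulmxA -mulmxA hermM -sqnormE /sqnorm big_ord1.
Qed.

Lemma psd_outer n r (v : 'cV[C]_n) : 0 <= r -> psd (rC r *: (v *m herm v)).
Proof.
move=> r_ge0; split; first by rewrite hermZ conj_rC herm_mul hermK.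
by move=> x; rewrite -/(qform _ x) qformZ qform_outer mulr_ge0 ?rC_ge0 ?exprn_ge0.
Qed.

Lemma steer_expj (d l : R) K (t : R) :
  exists u : 'I_K -> R, forall k, steer d l K t k 0 = expj (u k).
Proof. by eexists => k; rewrite mxE. Qed.

Lemma norm_steer (d l : R) K (t : R) k : `|steer d l K t k 0| = 1.
Proof. by rewrite mxE norm_expj. Qed.

Definition ris_gain N (a : 'cV[C]_N) (Phi : 'M[C]_N) (a2 : 'cV[C]_N) : C :=
  (a^T *m Phi *m a2) 0 0.

Lemma ris_gain_phase N (a a2 : 'cV[C]_N) phi :
  ris_gain a (phase_mx phi) a2 = \sum_k a k 0 * expj (phi k) * a2 k 0.
Proof. by rewrite /ris_gain mul_mx_diag mxE; apply: eq_bigr => k _; rewrite !mxE. Qed.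

Lemma norm_ris_gain_le N (a a2 : 'cV[C]_N) phi :
  (forall k, `|a k 0| = 1) -> (forall k, `|a2 k 0| = 1) ->
  `|ris_gain a (phase_mx phi) a2| <= N%:R.
Proof.
move=> a_unit a2_unit; rewrite ris_gain_phase.
apply: le_trans (ler_norm_sum _ _ _) _.
rewrite (eq_bigr (fun _ => 1)) ?sumr_const ?card_ord // => k _.
by rewrite !normrM a_unit a2_unit norm_expj !mulr1.
Qed.

Lemma ris_gain_aligned N (a a2 : 'cV[C]_N) (u v : 'I_N -> R) :
  (forall k, a k 0 = expj (u k)) -> (forall k, a2 k 0 = expj (v k)) ->
  ris_gain a (phase_mx (fun k => - (u k + v k))) a2 = N%:R.
Proof.
move=> a_phase a2_phase; rewrite ris_gain_phase.
rewrite (eq_bigr (fun _ => 1)) ?sumr_const ?card_ord // => k _.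
by rewrite a_phase a2_phase !expjD opprD addrA subrr add0r addNr expj0.
Qed.

Lemma mulmx_rank1 N Mt (a a2 : 'cV[C]_N) (c : 'cV[C]_Mt) Phi k :
  a^T *m Phi *m (k *: (a2 *m c^T)) = (k * ris_gain a Phi a2) *: c^T.
Proof.
rewrite -scalemxAr mulmxA {1}[a^T *m Phi *m a2]mx11_scalar mul_scalar_mx.
by rewrite scalerA.
Qed.

Lemma tx_gain_rank1 N Mt (a a2 : 'cV[C]_N) (c : 'cV[C]_Mt) Phi k Rm :
  tx_gain a Phi (k *: (a2 *m c^T)) Rm
  = `|k * ris_gain a Phi a2| ^+ 2 * qform Rm (cj c).
Proof.
rewrite /tx_gain; set X := a^T *m Phi *m _.
have -> : X *m Rm *m herm (k *: (a2 *m c^T)) *m herm Phi *m cj a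
          = X *m Rm *m herm X by rewrite /X !herm_mul herm_trmx !mulmxA.
rewrite /X mulmx_rank1 hermZ herm_trmx -herm_conj.
by rewrite -!scalemxAl -scalemxAr scalerA mxE normCK.
Qed.

Lemma rx_rank1 N Mr (a a2 : 'cV[C]_N) (b : 'cV[C]_Mr) Phi k :
  (k *: (b *m a2^T)) *m Phi^T *m a = (k * ris_gain a Phi a2) *: b.
Proof.
have trE : a2^T *m (Phi^T *m a) = (a^T *m Phi *m a2)^T.
  by rewrite mulmxA !trmx_mul trmxK mulmxA.
rewrite -!scalemxAl -!mulmxA trE {1}[a^T *m Phi *m a2]mx11_scalar tr_scalar_mx.
by rewrite mul_mx_scalar scalerA.
Qed.

Section Optimum.
Variables (N Mt : nat) (P0 : R) (u v : 'I_N -> R).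
Variables (a a2 : 'cV[C]_N) (c : 'cV[C]_Mt).
Hypothesis a_phase : forall k, a k 0 = expj (u k).
Hypothesis a2_phase : forall k, a2 k 0 = expj (v k).
Hypothesis c_unit : forall k, `|c k 0| = 1.
Hypothesis Mt_gt0 : (0 < Mt)%N.
Hypothesis P0_ge0 : 0 <= P0.

Let cj_c_unit k : `|cj c k 0| = 1.
Proof. by rewrite mxE norm_conjC. Qed.

Lemma feasible_gain_le Rm Phi : feasible P0 Rm Phi ->
  `|ris_gain a Phi a2| <= N%:R /\ 0 <= qform Rm (cj c) <= Mt%:R * rC P0.
Proof.
move=> [Rm_psd [tr_le [phi ->]]]; split.
  by apply: norm_ris_gain_le => k; rewrite ?a_phase ?a2_phase norm_expj.
rewrite Rm_psd.2 /=; apply: le_trans (qform_le_trace Rm_psd cj_c_unit) _.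
by rewrite ler_wpM2l.
Qed.

Let Ropt := rC (P0 / Mt%:R) *: (cj c *m herm (cj c)).

Let rC_divfK : rC (P0 / Mt%:R) * Mt%:R = rC P0.
Proof. by rewrite rCE fmorph_div rmorph_nat divfK ?pnatr_eq0 -?lt0n. Qed.

Lemma feasible_opt : feasible P0 Ropt (phase_mx (fun k => - (u k + v k))).
Proof.
split; first by apply: psd_outer; rewrite divr_ge0.
split; last by eexists.
by rewrite /Ropt mxtraceZ mxtrace_outer sqnorm_unit // rC_divfK.
Qed.

Lemma qform_opt : qform Ropt (cj c) = Mt%:R * rC P0.
Proof.
rewrite /Ropt qformZ qform_outer -sqnormE sqnorm_unit // normr_nat.
by rewrite expr2 mulrA rC_divfK mulrC.
Qed.

Lemma is_max_value_gain (Z : C) m (f : 'M[C]_Mt -> 'M[C]_N -> C) : 0 <= Z ->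
  (forall Rm Phi, f Rm Phi = Z * (`|ris_gain a Phi a2| ^+ m * qform Rm (cj c))) ->
  is_max_value P0 f (Z * (N%:R ^+ m * (Mt%:R * rC P0))).
Proof.
move=> Z_ge0 fE; split => [Rm Phi feas|].
  have [gain_le /andP[q_ge0 q_le]] := feasible_gain_le feas.
  by rewrite fE ler_wpM2l // ler_pM ?exprn_ge0 ?lerXn2r ?nnegrE.
exists Ropt, (phase_mx (fun k => - (u k + v k))); split; first exact: feasible_opt.
by rewrite fE (ris_gain_aligned a_phase a2_phase) normr_nat qform_opt.
Qed.

End Optimum.

End RisBeamforming.

Theorem proposition2 (R : realType) (N Mt Mr : nat)
  (P0 sigma2 L dhat lambda theta theta1 theta2 : R) (alpha : R[i]) :
  (0 < N)%N -> (0 < Mt)%N -> (0 < Mr)%N ->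
  0 < P0 -> 0 < sigma2 -> 0 < L -> 0 < dhat -> 0 < lambda ->
  let Gt : 'M[R[i]]_(N, Mt) :=
    rC (Num.sqrt L) *: (steer dhat lambda N theta2 *m (steer dhat lambda Mt theta1)^T) in
  let Gr : 'M[R[i]]_(Mr, N) :=
    rC (Num.sqrt L) *: (steer dhat lambda Mr theta1 *m (steer dhat lambda N theta2)^T) in
  is_max_value P0 (SNR1 dhat lambda theta alpha sigma2 Gt Gr)
    (rC (P0 * L ^+ 2 * (Mt * Mr * N ^ 4)%:R / sigma2) * `|alpha| ^+ 2) /\
  is_max_value P0 (SNR2 Mr dhat lambda theta alpha sigma2 Gt)
    (rC (P0 * L * (Mt * Mr * N ^ 2)%:R / sigma2) * `|alpha| ^+ 2).
Proof.
move=> _ Mt_gt0 _ P0_gt0 sigma2_gt0 L_gt0 _ _ Gt Gr.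
have [u a_phase] := steer_expj dhat lambda N theta.
have [v a2_phase] := steer_expj dhat lambda N theta2.
have max_gain := is_max_value_gain a_phase a2_phase (norm_steer dhat lambda theta1)
  Mt_gt0 (ltW P0_gt0).
have sqrtL : `|rC (Num.sqrt L)| ^+ 2 = rC L.
  by rewrite normCK conj_rC !rCE -rmorphM -expr2 sqr_sqrtr ?ltW.
have L_ge0 : 0 <= rC L by rewrite rC_ge0 ?ltW.
have Z_ge0 (z : R[i]) : 0 <= z -> 0 <= `|alpha| ^+ 2 * z * Mr%:R / rC sigma2.
  move=> z_ge0; apply: divr_ge0; last exact/rC_ge0/ltW.
  by rewrite !mulr_ge0 ?exprn_ge0 ?normr_ge0 ?ler0n.
split.
- have -> : rC (P0 * L ^+ 2 * (Mt * Mr * N ^ 4)%:R / sigma2) * `|alpha| ^+ 2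
         = `|alpha| ^+ 2 * rC L ^+ 2 * Mr%:R / rC sigma2 * (N%:R ^+ 4 * (Mt%:R * rC P0)).
    by rewrite !natrM !rCE !rmorphM fmorphV !rmorph_nat; ring.
  apply: max_gain => [|Rm Phi]; first exact/Z_ge0/exprn_ge0.
  rewrite /SNR1 rx_rank1 tx_gain_rank1 sqnormZ (sqnorm_unit (norm_steer _ _ _)).
  by rewrite normrM exprMn sqrtL; ring.
- have -> : rC (P0 * L * (Mt * Mr * N ^ 2)%:R / sigma2) * `|alpha| ^+ 2
         = `|alpha| ^+ 2 * rC L * Mr%:R / rC sigma2 * (N%:R ^+ 2 * (Mt%:R * rC P0)).
    by rewrite !natrM !rCE !rmorphM fmorphV !rmorph_nat; ring.
  apply: max_gain => [|Rm Phi]; first exact: Z_ge0.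
  rewrite /SNR2 tx_gain_rank1 (sqnorm_unit (norm_steer _ _ _)).
  by rewrite normrM exprMn sqrtL; ring.
Qed.
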